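(* Let $n \in \mathbb{Z}_{>0}$, $m \in \mathbb{Z}_{\geq 0}$ and $M=2m+1$. For $\pi\in\mathrm{QTCPP}(n,M)$ define $(\pi',t)$ by $\pi'_{i,j}=\pi_{i,j}-m-1$ if $i+j<n+1$, $\pi'_{i,j}=\max(\pi_{i,j}-m-1,\,m-\pi_{i,j})$ if $i+j=n+1$, and $t_i=0$ if $\pi_{i,n+1-i}\ge m+1$, $t_i=1$ if $\pi_{i,n+1-i}<m+1$ ($1\le i\le n$). Then $\pi\mapsto(\pi',t)$ is a bijection $\mathrm{QTCPP}(n,M)\to\mathrm{stairPP}(n,m)\times\{0,1\}^n$, and its inverse is given by $\pi_{i,j}=m-\pi'_{i,j}$ if $i+j=n+1$ and $t_i=1$, and $\pi_{i,j}=m+1+\pi'_{i,j}$ otherwise.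
   Context: $\mathrm{stairPP}(n,K)$ is the set of arrays $\pi=(\pi_{i,j})$ of nonnegative integers indexed by cells $(i,j)$, $i,j\ge1$, $i+j\le n+1$, weakly decreasing along rows and columns, with $\pi_{1,1}\le K$. $\mathrm{QTCPP}(n,M)$ is the set of $\pi\in\mathrm{stairPP}(n,M)$ such that (1) $\pi_{i,j}\ge M-\pi_{i-1,j}$ whenever $i+j=n+1$ and $2\le i\le n$, and (2) $\pi_{i,j}\ge M-\pi_{i,j-1}$ whenever $i+j=n+1$ and $2\le j\le n$. *)

From mathcomp Require Import all_boot.
Set Implicit Arguments. Unset Strict Implicit. Unset Printing Implicit Defensive.

(* Cells (i,j) of the staircase, 1-indexed: i,j >= 1, i + j <= n + 1.
   Coordinates are stored in 'I_n.+2 (values 0..n+1). *)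
Definition cell (n : nat) :=
  {p : 'I_n.+2 * 'I_n.+2 | [&& 0 < p.1, 0 < p.2 & p.1 + p.2 <= n.+1]}.

Definition arr (n : nat) := {ffun cell n -> nat}.

Definition ci n (c : cell n) : nat := (val c).1.
Definition cj n (c : cell n) : nat := (val c).2.

(* Entry pi_{i,j} (1-indexed); 0 outside the staircase (never used there). *)
Definition entry n (pi : arr n) (i j : nat) : nat :=
  odflt 0 (omap pi (insub ((inord i : 'I_n.+2), (inord j : 'I_n.+2)) : option (cell n))).

Definition is_cell (n i j : nat) : bool := [&& 0 < i, 0 < j & i + j <= n.+1].

Definition stairPP (n K : nat) (pi : arr n) : Prop :=
  (forall i j, is_cell n i j -> is_cell n i j.+1 -> entry pi i j.+1 <= entry pi i j) /\
  (forall i j, is_cell n i j -> is_cell n i.+1 j -> entry pi i.+1 j <= entry pi i j) /\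
  (is_cell n 1 1 -> entry pi 1 1 <= K).
Arguments stairPP : clear implicits.

(* QTCPP(n,M); nat truncated subtraction is harmless here:
   a >= M - b (in Z) iff a >= M - b (truncated, in nat). *)
Definition QTCPP (n M : nat) (pi : arr n) : Prop :=
  stairPP n M pi /\
  (forall i j, i + j = n.+1 -> 2 <= i <= n -> M - entry pi i.-1 j <= entry pi i j) /\
  (forall i j, i + j = n.+1 -> 2 <= j <= n -> M - entry pi i j.-1 <= entry pi i j).
Arguments QTCPP : clear implicits.

(* t in {0,1}^n is encoded as {ffun 'I_n -> bool}: t_i = 1 iff t (i-1) = true. *)
Definition tvec (n : nat) := {ffun 'I_n -> bool}.
Definition tval n (t : tvec n) (i : nat) : bool :=
  odflt false (omap t (insub i.-1 : option 'I_n)).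

(* On QTCPP, pi_{i,j} >= m+1 off the antidiagonal, so
   truncated subtraction agrees with integer subtraction; on the antidiagonal,
   max(pi-m-1, m-pi) computed with truncated subtraction agrees with the integer max. *)
Definition phi_arr n m (pi : arr n) : arr n :=
  [ffun c => if ci c + cj c < n.+1 then pi c - m.+1
             else maxn (pi c - m.+1) (m - pi c)].
Definition phi_t n m (pi : arr n) : tvec n :=
  [ffun i : 'I_n => ~~ (m.+1 <= entry pi i.+1 (n - i))].
Definition phi n m (pi : arr n) : arr n * tvec n := (phi_arr m pi, phi_t m pi).

Definition psi n m (p : arr n) (t : tvec n) : arr n :=
  [ffun c => if (ci c + cj c == n.+1) && tval t (ci c) then m - p c
             else m.+1 + p c].

From Pilot Require Import Defs.
From mathcomp Require Import all_boot zify.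
Set Implicit Arguments. Unset Strict Implicit. Unset Printing Implicit Defensive.

(* An entry x of a QTCPP(n, 2m+1) in a cell with i + j = n sits above an
   antidiagonal entry y with y <= x and x + y >= 2m+1, so x >= m+1; by
   monotonicity every entry off the antidiagonal is >= m+1, and there pi - m - 1
   is a plane partition bounded by m.  On the antidiagonal v |-> max(v-m-1, m-v)
   folds [0, 2m+1] onto two copies of [0, m], t recording the copy, and the
   inequalities pi_{i,j} >= M - pi_{neighbour} are exactly what keeps the folded
   values below their off-antidiagonal neighbours. *)

Section Cells.

Variable n : nat.

Lemma entry_cell (pi : arr n) (c : cell n) : entry pi (ci c) (cj c) = pi c.
Proof. by rewrite /entry /ci /cj !inord_val -surjective_pairing valK. Qed.

Lemma is_cellP i j : reflect (exists c : cell n, ci c = i /\ cj c = j) (is_cell n i j).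
Proof.
apply: (iffP idP) => [cij | [[[a b] /= cab] [<- <-]] //].
have /and3P[i0 j0 ij] := cij.
have [lt_i lt_j] : i < n.+2 /\ j < n.+2 by lia.
have cx : is_cell n (inord i : 'I_n.+2) (inord j : 'I_n.+2) by rewrite !inordK.
by exists (exist _ (inord i, inord j) cx); rewrite /ci /cj /= !inordK.
Qed.

Lemma cell_is_cell (c : cell n) : is_cell n (ci c) (cj c).
Proof. by apply/is_cellP; exists c. Qed.

Lemma eq_arr (p q : arr n) :
  (forall i j, is_cell n i j -> entry p i j = entry q i j) -> p = q.
Proof.
by move=> epq; apply/ffunP => c; rewrite -!entry_cell epq ?cell_is_cell.
Qed.

Lemma entry_ffun (F : nat -> nat -> nat -> nat) (pi : arr n) i j :
  is_cell n i j -> entry [ffun c => F (ci c) (cj c) (pi c)] i j = F i j (entry pi i j).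
Proof. by case/is_cellP=> c [<- <-]; rewrite !entry_cell ffunE. Qed.

Lemma tvalE (t : tvec n) (k : 'I_n) : Defs.tval t k.+1 = t k.
Proof.
rewrite /Defs.tval /=; case: insubP => [k' _ k'k | ]; last by rewrite ltn_ord.
by congr (t _); apply: val_inj.
Qed.

End Cells.

Definition adj (i j i' j' : nat) : bool := ((i', j') == (i.+1, j)) || ((i', j') == (i, j.+1)).

Lemma adj_sum i j i' j' : adj i j i' j' -> i' + j' = (i + j).+1.
Proof. by case/orP=> /eqP[-> ->]; rewrite ?addnS. Qed.

Section Adjacency.

Variable n : nat.
Implicit Type pi : arr n.

Lemma adj_is_cell i j i' j' :
  adj i j i' j' -> is_cell n i j -> i' + j' <= n.+1 -> is_cell n i' j'.
Proof. by case/orP=> /eqP[-> ->]; rewrite /is_cell; lia. Qed.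

Lemma adj_off_antidiag i j i' j' : adj i j i' j' -> is_cell n i' j' -> i + j < n.+1.
Proof. by move/adj_sum=> sum_ij /and3P[_ _]; lia. Qed.

Definition adj_mono pi : Prop := forall i j i' j', adj i j i' j' ->
  is_cell n i j -> is_cell n i' j' -> entry pi i' j' <= entry pi i j.

Definition antidiag_bound (M : nat) pi : Prop := forall i j i' j', adj i j i' j' ->
  is_cell n i j -> i' + j' = n.+1 -> M - entry pi i j <= entry pi i' j'.

Lemma stairPP_adjE K pi :
  stairPP n K pi <-> adj_mono pi /\ (is_cell n 1 1 -> entry pi 1 1 <= K).
Proof.
split=> [[le_row [le_col le_top]] | [mono le_top]].
  by split=> // i j i' j' /orP[] /eqP[-> ->]; [apply: le_col | apply: le_row].
by split; [|split] => // i j cij cij'; apply: mono; rewrite // /adj eqxx ?orbT.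
Qed.

Lemma QTCPP_adjE M pi : QTCPP n M pi <-> stairPP n M pi /\ antidiag_bound M pi.
Proof.
split=> [[S [bnd_col bnd_row]] | [S bnd]].
  split=> // i j i' j' /orP[] /eqP[-> ->] cij e.
    by apply: bnd_col; rewrite // /is_cell in cij *; lia.
  by apply: bnd_row; rewrite // /is_cell in cij *; lia.
split=> //; split.
  case=> [|i] j e /andP[le2 len] //.
  by apply: bnd; rewrite //= /adj ?eqxx // /is_cell; lia.
move=> i [|j] e /andP[le2 len] //.
by apply: bnd; rewrite //= /adj ?eqxx ?orbT // /is_cell; lia.
Qed.

Lemma adj_mono_le pi i j i' j' : adj_mono pi -> is_cell n i j -> is_cell n i' j' ->
  i <= i' -> j <= j' -> entry pi i' j' <= entry pi i j.
Proof.
move=> mono cij; have [k] := ubnP (i' + j').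
elim: k i' j' => [//|k IH] i' j' lt_k cij' le_i le_j.
have [[-> ->] // | lt_ij] : (i' = i /\ j' = j) \/ (i < i' \/ j < j') by lia.
have [i'' [j'' [a le_i'' le_j'']]] :
    exists i'' j'', [/\ adj i'' j'' i' j', i <= i'' & j <= j''].
  case: lt_ij => lt; [exists i'.-1, j' | exists i', j'.-1];
    by split; rewrite ?/adj ?prednK ?eqxx ?orbT //; lia.
have sum := adj_sum a.
have ci''j'' : is_cell n i'' j'' by rewrite /is_cell in cij cij' *; lia.
by apply: leq_trans (mono _ _ _ _ a ci''j'' cij') (IH _ _ _ ci''j'' _ _) => //; lia.
Qed.

Lemma stairPP_ub K pi i j : stairPP n K pi -> is_cell n i j -> entry pi i j <= K.
Proof.
case/stairPP_adjE=> mono le_top cij.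
have c11 : is_cell n 1 1 by rewrite /is_cell in cij *; lia.
by apply: leq_trans (le_top c11); apply: adj_mono_le => //; rewrite /is_cell in cij; lia.
Qed.

Lemma QTCPP_lb m pi i j : QTCPP n (2 * m + 1) pi ->
  is_cell n i j -> i + j <= n -> m < entry pi i j.
Proof.
case/QTCPP_adjE=> /stairPP_adjE[mono _] bnd cij le_n.
have cend : is_cell n i (n - i) by rewrite /is_cell in cij *; lia.
have cnext : is_cell n i.+1 (n - i) by rewrite /is_cell in cij *; lia.
have adj_next : adj i (n - i) i.+1 (n - i) by rewrite /adj eqxx.
have le_end : entry pi i (n - i) <= entry pi i j.
  by apply: adj_mono_le => //; rewrite /is_cell in cij; lia.
have := mono _ _ _ _ adj_next cend cnext.
have := bnd _ _ _ _ adj_next cend ltac:(rewrite /is_cell in cij; lia).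
lia.
Qed.

End Adjacency.

Section Folding.

Variables n m : nat.
Implicit Types (pi p : arr n) (t : tvec n).

Definition phi_val (i j x : nat) : nat :=
  if i + j < n.+1 then x - m.+1 else maxn (x - m.+1) (m - x).

Definition psi_val (b : bool) (i j x : nat) : nat :=
  if (i + j == n.+1) && b then m - x else m.+1 + x.

Lemma entry_phi_arr pi i j :
  is_cell n i j -> entry (phi_arr m pi) i j = phi_val i j (entry pi i j).
Proof. exact: (entry_ffun (fun i j x => phi_val i j x)). Qed.

Lemma entry_psi p t i j :
  is_cell n i j -> entry (psi m p t) i j = psi_val (Defs.tval t i) i j (entry p i j).
Proof. exact: (entry_ffun (fun i j x => psi_val (Defs.tval t i) i j x)). Qed.

Lemma tval_phi_t pi i :
  0 < i <= n -> Defs.tval (phi_t m pi) i = (entry pi i (n.+1 - i) <= m).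
Proof.
case: i => [|i] // /andP[_ lt_i].
by rewrite (tvalE _ (Ordinal lt_i)) ffunE subSS ltnNge negbK.
Qed.

Lemma phi_val_off i j x : i + j < n.+1 -> phi_val i j x = x - m.+1.
Proof. by rewrite /phi_val => ->. Qed.

Lemma psi_val_off b i j x : i + j < n.+1 -> psi_val b i j x = m.+1 + x.
Proof. by rewrite /psi_val ltn_neqAle => /andP[/negbTE-> _]. Qed.

Lemma psi_val_bounds b i j x : m - x <= psi_val b i j x <= m.+1 + x.
Proof. by rewrite /psi_val; case: ifP; lia. Qed.

Lemma phi_valK i j x : i + j <= n.+1 -> (i + j < n.+1 -> m < x) ->
  psi_val (x <= m) i j (phi_val i j x) = x.
Proof. by rewrite /phi_val /psi_val; case: ltngtP => //= _ _; case: leqP; lia. Qed.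

Lemma psi_valK b i j x : x <= m -> phi_val i j (psi_val b i j x) = x.
Proof. by rewrite /phi_val /psi_val; case: ltngtP; case: b => /=; lia. Qed.

Lemma phi_arr_stairPP pi : QTCPP n (2 * m + 1) pi -> stairPP n m (phi_arr m pi).
Proof.
move=> Q; have lb := QTCPP_lb Q.
case/QTCPP_adjE: (Q) => S bnd; case/stairPP_adjE: (S) => mono _.
apply/stairPP_adjE; split.
- move=> i j i' j' a cij cij'; have off := adj_off_antidiag a cij'.
  have := mono _ _ _ _ a cij cij'; have := lb i j cij off.
  rewrite !entry_phi_arr // (phi_val_off _ off) /phi_val.
  case: (ltnP (i' + j') n.+1) => [_ | on]; first lia.
  by have := bnd _ _ _ _ a cij ltac:(case/and3P: cij'; lia); lia.
- move=> c11; have := stairPP_ub S c11.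
  by rewrite entry_phi_arr // /phi_val; case: ltnP; lia.
Qed.

Lemma psi_QTCPP p t : stairPP n m p -> QTCPP n (2 * m + 1) (psi m p t).
Proof.
move=> S; have ub := stairPP_ub S; case/stairPP_adjE: (S) => mono _.
apply/QTCPP_adjE; split; first (apply/stairPP_adjE; split).
- move=> i j i' j' a cij cij'; have := mono _ _ _ _ a cij cij'.
  rewrite !entry_psi // (psi_val_off _ _ (adj_off_antidiag a cij')).
  by have /andP[_] := psi_val_bounds (Defs.tval t i') i' j' (entry p i' j'); lia.
- move=> c11; have := ub _ _ c11; rewrite entry_psi //.
  by have /andP[_] := psi_val_bounds (Defs.tval t 1) 1 1 (entry p 1 1); lia.
- move=> i j i' j' a cij e.
  have cij' : is_cell n i' j' by apply: adj_is_cell a cij _; rewrite e.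
  have := mono _ _ _ _ a cij cij'.
  rewrite !entry_psi // (psi_val_off _ _ (adj_off_antidiag a cij')).
  by have /andP[+ _] := psi_val_bounds (Defs.tval t i') i' j' (entry p i' j'); lia.
Qed.

Lemma phiK pi : QTCPP n (2 * m + 1) pi -> psi m (phi m pi).1 (phi m pi).2 = pi.
Proof.
move=> Q; apply: eq_arr => i j cij; rewrite entry_psi // entry_phi_arr //.
have /and3P[i_gt0 j_gt0 le_ij] := cij.
have [off | on] : i + j < n.+1 \/ i + j = n.+1 by lia.
  by rewrite phi_val_off // psi_val_off //; have := QTCPP_lb Q cij off; lia.
rewrite /= tval_phi_t; last lia.
by rewrite -on addKn phi_valK // on ltnn.
Qed.

Lemma psiK p t : stairPP n m p -> phi m (psi m p t) = (p, t).
Proof.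
move=> S; congr pair.
  apply: eq_arr => i j cij; have := stairPP_ub S cij.
  by rewrite entry_phi_arr // entry_psi //; apply: psi_valK.
apply/ffunP=> k; rewrite ffunE; have lt_k := ltn_ord k.
have ckn : is_cell n k.+1 (n - k) by rewrite /is_cell; lia.
rewrite entry_psi // tvalE /psi_val addSn subnKC ?eqxx; last exact: ltnW.
by case: (t k); rewrite /= ltnNge negbK; lia.
Qed.

End Folding.

Theorem mainTheorem3 (n m : nat) : 0 < n ->
  let M := 2 * m + 1 in
  (forall pi : arr n, QTCPP n M pi -> stairPP n m (phi m pi).1) /\
  (forall (p : arr n) (t : tvec n), stairPP n m p -> QTCPP n M (psi m p t)) /\
  (forall pi : arr n, QTCPP n M pi -> psi m (phi m pi).1 (phi m pi).2 = pi) /\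
  (forall (p : arr n) (t : tvec n), stairPP n m p -> phi m (psi m p t) = (p, t)).
Proof.
move=> _ M; split; first exact: phi_arr_stairPP.
split; first exact: psi_QTCPP.
by split; [exact: phiK | exact: psiK].
Qed.
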